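(* The relation $\mathcal R_2=\{(w2w,w):w\in\{0,1\}^*\}\subseteq\{0,1,2\}^*\times\{0,1\}^*$ can be computed by a probabilistic finite state transducer with probability $2/3$, and by a quantum finite state transducer with probability $2/3$.
   Context: A probabilistic finite state transducer (pfst) is a tuple $T=(Q,\Sigma_1,\Sigma_2,V,f,q_0,Q_{\rm acc},Q_{\rm rej})$ with finite state set $Q$, finite input/output alphabets $\Sigma_1,\Sigma_2$, initial state $q_0$, disjoint accepting/rejecting sets $Q_{\rm acc},Q_{\rm rej}\subseteq Q$ (the other states are non-halting). For each $a\in\Sigma_1\cup\{\ddagger,\$\}$ ($\ddagger,\$$ are end markers) there is a stochastic $Q\times Q$ matrix $V_a$ and an output function $f_a:Q\to\Sigma_2^*$; $V_\$$ puts all probability on halting states. On input $v$ the machine reads $\ddagger v\$$; in state $q$ reading $a$ it appends $f_a(q)$ to the output tape and moves to state $p$ with probability $(V_a)_{qp}$; if $p$ is accepting (rejecting) it halts and accepts with the current output (rejects). $T(w|v)$ is the probability of accepting with output $w$ on input $v$. A quantum finite state transducer (qfst) has the same data except that each $V_a$ is a unitary on $\ell^2(Q)$ (and $V_\$$ maps the span of non-halting states into the span of halting states). Its non-halting part is a vector $\psi=\sum_{q,w}\alpha_{qw}|q\rangle\otimes|w\rangle\in\ell^2(Q\times\Sigma_2^* )$, initially $|q_0\rangle\otimes|\epsilon\rangle$; reading $a$ maps it to $\psi'=\sum_{q,w}\alpha_{qw}V_a|q\rangle\otimes|wf_a(q)\rangle$ with $V_a|q\rangle=\sum_p(V_a)_{qp}|p\rangle$,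 after which the squared norm of the component of $\psi'$ on $\mathrm{span}(Q_{\rm acc})\otimes|x\rangle$ is added to the probability of accepting with output $x$, the squared norm of the component on $\mathrm{span}(Q_{\rm rej})\otimes\ell^2(\Sigma_2^* )$ to the rejection probability, and the computation continues with the projection onto non-halting states. $T(w|v)$ is defined analogously. For $\alpha>1/2$, $T$ computes $\mathcal R$ with probability $\alpha$ if for all $v,w$: $(v,w)\in\mathcal R\Rightarrow T(w|v)\ge\alpha$ and $(v,w)\notin\mathcal R\Rightarrow T(w|v)\le1-\alpha$. *)

From mathcomp Require Import all_boot all_order all_algebra.
From mathcomp Require Import reals complex.
Set Implicit Arguments.
Unset Strict Implicit.
Unset Printing Implicit Defensive.
Import Order.TTheory GRing.Theory Num.Theory.
Local Open Scope ring_scope.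

(** Tape symbols: letters of the input alphabet plus the two end markers
    [TStart] (the left marker "‡") and [TEnd] (the right marker "$"). *)
Inductive tsym (A : Type) : Type := TSym of A | TStart | TEnd.
Arguments TStart {A}.
Arguments TEnd {A}.

Definition tape (A : Type) (v : seq A) : seq (tsym A) :=
  TStart :: rcons (map (@TSym A) v) TEnd.

(** ** Probabilistic finite state transducers.
    The state set is 'I_n.  [pV a] is the matrix V_a, with (pV a) q p the
    probability to move from q to p when reading a.  [pf a q] = f_a(q). *)
Record pfst (S1 S2 : Type) (R : realType) := Pfst {
  pn   : nat;
  pV   : tsym S1 -> 'M[R]_pn;
  pf   : tsym S1 -> 'I_pn -> seq S2;
  pq0  : 'I_pn;
  pacc : {set 'I_pn};
  prej : {set 'I_pn} }.
Arguments pn {S1 S2 R} _.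
Arguments pV {S1 S2 R} _ _.
Arguments pf {S1 S2 R} _ _ _.
Arguments pq0 {S1 S2 R} _.
Arguments pacc {S1 S2 R} _.
Arguments prej {S1 S2 R} _.

Definition halting n (acc rej : {set 'I_n}) (q : 'I_n) := (q \in acc) || (q \in rej).

Definition is_pfst S1 S2 (R : realType) (T : pfst S1 S2 R) : Prop :=
  [/\ [disjoint pacc T & prej T],
      (forall a q p, 0 <= pV T a q p),
      (forall a q, \sum_p pV T a q p = 1) &
      (forall q p, ~~ halting (pacc T) (prej T) p -> pV T TEnd q p = 0)].

Fixpoint pacc_from S1 (S2 : eqType) (R : realType) (T : pfst S1 S2 R)
    (q : 'I_(pn T)) (s : seq (tsym S1)) (out w : seq S2) : R :=
  match s with
  | [::] => 0
  | a :: s' =>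
      let out' := out ++ pf T a q in
      \sum_p pV T a q p *
        (if p \in pacc T then (out' == w)%:R
         else if p \in prej T then 0
         else @pacc_from S1 S2 R T p s' out' w)
  end.

Definition pfst_prob S1 (S2 : eqType) (R : realType) (T : pfst S1 S2 R)
    (w : seq S2) (v : seq S1) : R :=
  @pacc_from S1 S2 R T (pq0 T) (tape v) [::] w.

(** ** Quantum finite state transducers (amplitudes in R[i], the complex numbers
    over the real field R).  (qV a) q p is the coefficient (V_a)_{qp}, i.e.
    V_a|q> = \sum_p (qV a) q p |p>. *)
Record qfst (S1 S2 : Type) (R : realType) := Qfst {
  qn   : nat;
  qV   : tsym S1 -> 'M[R[i]]_qn;
  qf   : tsym S1 -> 'I_qn -> seq S2;
  qq0  : 'I_qn;
  qacc : {set 'I_qn};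
  qrej : {set 'I_qn} }.
Arguments qn {S1 S2 R} _.
Arguments qV {S1 S2 R} _ _.
Arguments qf {S1 S2 R} _ _ _.
Arguments qq0 {S1 S2 R} _.
Arguments qacc {S1 S2 R} _.
Arguments qrej {S1 S2 R} _.

Definition unitary (R : realType) n (M : 'M[R[i]]_n) : Prop :=
  M *m (map_mx (@conjc R) M)^T = 1%:M.

Definition is_qfst S1 S2 (R : realType) (T : qfst S1 S2 R) : Prop :=
  [/\ [disjoint qacc T & qrej T],
      (forall a, unitary (qV T a)) &
      (forall q p, ~~ halting (qacc T) (qrej T) q ->
                   ~~ halting (qacc T) (qrej T) p -> qV T TEnd q p = 0)].

Definition sqmod (R : realType) (z : R[i]) : R :=
  (complex.Re z) ^+ 2 + (complex.Im z) ^+ 2.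

(** One step of the evolution: from the non-halting vector psi (a function
    Q x S2^* -> C), reading a, gives psi' with
    psi'(p, x) = \sum_q \sum_{y : y ++ f_a(q) = x} psi(q, y) (V_a)_{qp}. *)
Definition qstep S1 (S2 : eqType) (R : realType) (T : qfst S1 S2 R)
    (a : tsym S1) (psi : 'I_(qn T) -> seq S2 -> R[i]) :
    'I_(qn T) -> seq S2 -> R[i] :=
  fun p x =>
    \sum_q (if suffix (qf T a q) x
            then psi q (take (size x - size (qf T a q)) x) * qV T a q p
            else 0).

Definition qproj S1 S2 (R : realType) (T : qfst S1 S2 R)
    (psi : 'I_(qn T) -> seq S2 -> R[i]) : 'I_(qn T) -> seq S2 -> R[i] :=
  fun p x => if halting (qacc T) (qrej T) p then 0 else psi p x.

Fixpoint qacc_from S1 (S2 : eqType) (R : realType) (T : qfst S1 S2 R)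
    (psi : 'I_(qn T) -> seq S2 -> R[i]) (s : seq (tsym S1)) (w : seq S2) : R :=
  match s with
  | [::] => 0
  | a :: s' =>
      let psi' := @qstep S1 S2 R T a psi in
      (\sum_(p in qacc T) sqmod (psi' p w)) + @qacc_from S1 S2 R T (@qproj S1 S2 R T psi') s' w
  end.

Definition qinit S1 (S2 : eqType) (R : realType) (T : qfst S1 S2 R) :
    'I_(qn T) -> seq S2 -> R[i] :=
  fun q x => ((q == qq0 T) && (x == [::]))%:R.

Definition qfst_prob S1 (S2 : eqType) (R : realType) (T : qfst S1 S2 R)
    (w : seq S2) (v : seq S1) : R :=
  @qacc_from S1 S2 R T (@qinit S1 S2 R T) (tape v) w.

Definition computes S1 S2 (R : realType) (prob : seq S2 -> seq S1 -> R)
    (Rel : seq S1 -> seq S2 -> bool) (alpha : R) : Prop :=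
  forall v w, (Rel v w -> alpha <= prob w v) /\ (~~ Rel v w -> prob w v <= 1 - alpha).

Definition emb01 (b : 'I_2) : 'I_3 := widen_ord (leqnSn 2) b.
Definition sym2 : 'I_3 := @Ordinal 3 2 isT.
Definition R2 (v : seq 'I_3) (w : seq 'I_2) : bool :=
  v == map emb01 w ++ sym2 :: map emb01 w.

(* Both transducers first split into three equally likely branches (probability
   1/3, resp. amplitude 1/sqrt 3) and are deterministic afterwards.  Branch [init]
   rejects on the next letter; branch [copy1] copies the bits before the 2 and then
   accepts at the right end marker iff no second 2 occurs; branch [skip1] skips up
   to the 2 and copies the bits after it, with the same acceptance condition.  Both
   live branches accept with output w exactly when the input is w2w, so
   T(w|v) = 2/3 on R_2 and T(w|v) <= 1/3 off it.
   In the quantum transducer every letter other than the left marker permutes the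
   basis states, so the three branches never interfere and the acceptance
   probability is the same as for the probabilistic one.  The initial unitary is
   the Householder reflection exchanging |init> with the uniform superposition of
   the three branch states. *)

From mathcomp Require Import all_boot all_order all_algebra all_fingroup.
From mathcomp Require Import reals complex ring lra.
From mathcomp Require boolp.
Set Implicit Arguments.
Unset Strict Implicit.
Unset Printing Implicit Defensive.
Import Order.TTheory GRing.Theory Num.Theory.
Local Open Scope ring_scope.

Lemma sum_delta (R : pzSemiRingType) n (c : 'I_n) (F : 'I_n -> R) :
  \sum_p (c == p)%:R * F p = F c.
Proof.
rewrite (bigD1 c) //= eqxx mul1r big1 ?addr0 // => p.
by rewrite eq_sym => /negPf ->; rewrite mul0r.
Qed.

Lemma sum_delta1 (R : pzSemiRingType) n (c : 'I_n) : \sum_p (c == p)%:R = 1 :> R.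
Proof. by rewrite -[RHS](sum_delta c (fun=> 1)); apply: eq_bigr => p _; rewrite mulr1. Qed.

Lemma eq_cat_suffix (T : eqType) (x y f : seq T) :
  (x == y ++ f) = suffix f x && (take (size x - size f) x == y).
Proof.
apply/eqP/andP => [-> | [/suffixP[z ->]]].
  by rewrite suffix_suffix size_cat addnK take_size_cat.
by rewrite size_cat addnK take_size_cat // => /eqP ->.
Qed.

Lemma perm_mxE (R : pzSemiRingType) n (s : 'S_n) i j :
  perm_mx s i j = (s i == j)%:R :> R.
Proof. by rewrite !mxE. Qed.

Lemma sqmodM (R : realType) (z z' : R[i]) : sqmod (z * z') = sqmod z * sqmod z'.
Proof. by case: z z' => [a b] [c d]; rewrite /sqmod /=; ring. Qed.

Lemma sqmod0 (R : realType) : sqmod (0 : R[i]) = 0.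
Proof. by rewrite /sqmod /= expr0n /= addr0. Qed.

Lemma sqmod_nat (R : realType) (b : bool) : sqmod (b%:R : R[i]) = b%:R.
Proof. by case: b; rewrite /sqmod /= ?expr0n /= ?expr1n ?addr0. Qed.

Lemma sqmod_real (R : realType) (r : R) : sqmod (real_complex R r) = r ^+ 2.
Proof. by rewrite /sqmod /= expr0n /= addr0. Qed.

Definition householder (F : fieldType) n (x : 'rV[F]_n) : 'M[F]_n :=
  1%:M - (2 / (x *m x^T) 0 0) *: (x^T *m x).

Lemma tr_householder (F : fieldType) n (x : 'rV[F]_n) :
  (householder x)^T = householder x.
Proof. by rewrite /householder linearB /= linearZ /= trmx1 trmx_mul trmxK. Qed.

Lemma householder_orthogonal (F : fieldType) n (x : 'rV[F]_n) :
  (x *m x^T) 0 0 != 0 -> householder x *m (householder x)^T = 1%:M.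
Proof.
move=> x_neq0; rewrite tr_householder /householder.
set k := (x *m x^T) 0 0; set X := x^T *m x.
have XX : X *m X = k *: X.
  by rewrite /X mulmxA -(mulmxA _ x) [x *m _]mx11_scalar mul_mx_scalar -scalemxAl.
rewrite mulmxBl mul1mx mulmxBr mulmx1 -scalemxAl -scalemxAr XX !scalerA.
have -> : 2 / k * (2 / k) * k = 2 / k + 2 / k by field.
by rewrite scalerDl opprB addrK subrK.
Qed.

Lemma unitary_real (R : realType) n (M : 'M[R]_n) :
  M *m M^T = 1%:M -> unitary (map_mx (real_complex R) M).
Proof.
move=> orthoM.
have conjM : map_mx (@conjc R) (map_mx (real_complex R) M) = map_mx (real_complex R) M.
  by apply/matrixP => i j; rewrite !mxE conjc_real.
by rewrite /unitary conjM map_trmx -map_mxM orthoM map_mx1.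
Qed.

Lemma unitary_perm_mx (R : realType) n (s : 'S_n) : unitary (perm_mx s : 'M[R[i]]_n).
Proof. by rewrite /unitary map_perm_mx tr_perm_mx -perm_mxM mulgV perm_mx1. Qed.

Definition not_start A (a : tsym A) := if a is TStart then false else true.

Lemma all_not_start_tape A (v : seq A) : all (@not_start A) (behead (tape v)).
Proof. by rewrite /= all_rcons all_map; elim: v. Qed.

Lemma tape_body A (v : seq A) : behead (tape v) = map (@TSym A) v ++ [:: TEnd].
Proof. by rewrite cats1. Qed.

Section DeterministicRun.
Variables (A : Type) (B : eqType) (n : nat).
Variables (next : tsym A -> 'I_n -> 'I_n) (out : tsym A -> 'I_n -> seq B).
Variables (acc rej : {set 'I_n}).

Fixpoint dacc_from (q : 'I_n) (y : seq B) (s : seq (tsym A)) (w : seq B) : bool :=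
  if s is a :: s' then
    let p := next a q in let y' := y ++ out a q in
    if p \in acc then y' == w else if p \in rej then false else dacc_from p y' s' w
  else false.

End DeterministicRun.

Section PfstDeterministic.
Variables (S1 : Type) (S2 : eqType) (R : realType) (T : pfst S1 S2 R).
Variable next : tsym S1 -> 'I_(pn T) -> 'I_(pn T).
Local Notation halt := (halting (pacc T) (prej T)).
Local Notation run := (dacc_from next (pf T) (pacc T) (prej T)).
Hypothesis pV_next : forall a q p, not_start a -> ~~ halt q ->
  pV T a q p = (next a q == p)%:R.

Lemma pacc_from_run s q y w : ~~ halt q -> all (@not_start S1) s ->
  pacc_from q s y w = (run q y s w)%:R.
Proof.
elim: s q y => [|a s IHs] q y //= live_q /andP[a_ok s_ok].
under eq_bigr => p _ do rewrite pV_next //.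
rewrite sum_delta; case: ifPn => // not_acc; case: ifPn => // not_rej.
by rewrite IHs // /halting negb_or not_acc.
Qed.

Lemma pfst_prob_branches v w :
  (forall p, halt p -> pV T TStart (pq0 T) p = 0) ->
  pfst_prob T w v = \sum_p pV T TStart (pq0 T) p *
    (run p (pf T TStart (pq0 T)) (behead (tape v)) w)%:R.
Proof.
move=> halt_unreached; rewrite /pfst_prob /tape; cbn [pacc_from].
apply: eq_bigr => p _.
have [/halt_unreached -> | live_p] := boolP (halt p); first by rewrite !mul0r.
move: (live_p); rewrite /halting negb_or => /andP[/negbTE -> /negbTE ->].
by rewrite pacc_from_run ?all_not_start_tape.
Qed.

End PfstDeterministic.

Section QfstPermutation.
Variables (S1 : Type) (S2 : eqType) (R : realType) (T : qfst S1 S2 R).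
Variable sigma : tsym S1 -> {perm 'I_(qn T)}.
Local Notation halt := (halting (qacc T) (qrej T)).
Local Notation run := (dacc_from (fun a q => sigma a q) (qf T) (qacc T) (qrej T)).

Definition classical_state (amp : 'I_(qn T) -> R[i]) (out : 'I_(qn T) -> seq S2) :
    'I_(qn T) -> seq S2 -> R[i] :=
  fun q x => (x == out q)%:R * amp q.

Lemma qstep_init :
  qstep TStart (@qinit S1 S2 R T) =
  classical_state (fun p => qV T TStart (qq0 T) p) (fun=> qf T TStart (qq0 T)).
Proof.
apply: boolp.funext => p; apply: boolp.funext => x.
rewrite /qstep /qinit /classical_state (bigD1 (qq0 T)) //= big1 ?addr0.
  by rewrite eqxx -[qf T _ _]cat0s eq_cat_suffix; case: suffix; rewrite ?mul0r.
by move=> q /negbTE q_other; rewrite q_other mul0r if_same.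
Qed.

Lemma qproj_classical amp out :
  qproj (classical_state amp out) =
  classical_state (fun p => if halt p then 0 else amp p) out.
Proof.
apply: boolp.funext => p; apply: boolp.funext => x.
by rewrite /qproj /classical_state; case: ifP; rewrite ?mulr0.
Qed.

Hypothesis qV_perm : forall a, not_start a -> qV T a = perm_mx (sigma a).

Lemma qstep_classical a amp out : not_start a ->
  qstep a (classical_state amp out) =
  classical_state (fun p => amp ((sigma a)^-1%g p))
                  (fun p => out ((sigma a)^-1%g p) ++ qf T a ((sigma a)^-1%g p)).
Proof.
move=> a_ok; apply: boolp.funext => p; apply: boolp.funext => x.
rewrite /qstep (bigD1 ((sigma a)^-1%g p)) //= big1 ?addr0 => [|q q_other].
  rewrite qV_perm // perm_mxE permKV eqxx mulr1 /classical_state eq_cat_suffix.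
  by case: suffix; rewrite ?mul0r.
rewrite qV_perm // perm_mxE.
have -> : (sigma a q == p) = false.
  by apply: contraNF q_other => /eqP <-; rewrite permK.
by rewrite mulr0 if_same.
Qed.

Lemma qacc_from_classical s amp out w : all (@not_start S1) s ->
  qacc_from (classical_state amp out) s w =
  \sum_q sqmod (amp q) * (run q (out q) s w)%:R.
Proof.
elim: s amp out => [|a s IHs] amp out /=.
  by move=> _; rewrite big1 // => q _; rewrite mulr0.
case/andP=> a_ok s_ok; rewrite qstep_classical // qproj_classical IHs //.
rewrite big_mkcond -big_split /= (reindex_inj (@perm_inj _ (sigma a))) /=.
apply: eq_bigr => q _; rewrite /classical_state /halting !permK.
case: ifP => [q_acc | not_acc] /=.
  by rewrite sqmodM sqmod_nat sqmod0 mul0r addr0 mulrC eq_sym.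
by rewrite add0r; case: (_ \in qrej T); rewrite //= sqmod0 mul0r mulr0.
Qed.

Lemma qfst_prob_branches v w :
  (forall p, halt p -> qV T TStart (qq0 T) p = 0) ->
  qfst_prob T w v = \sum_p sqmod (qV T TStart (qq0 T) p) *
    (run p (qf T TStart (qq0 T)) (behead (tape v)) w)%:R.
Proof.
move=> halt_unreached; rewrite /qfst_prob /tape; cbn [qacc_from].
rewrite qstep_init qproj_classical big1 ?add0r => [|p p_acc]; last first.
  by rewrite /classical_state halt_unreached ?mulr0 ?sqmod0 // /halting p_acc.
rewrite (qacc_from_classical _ _ _ (all_not_start_tape v)).
by apply: eq_bigr => p _; case: ifPn => [/halt_unreached -> | //]; rewrite sqmod0.
Qed.

End QfstPermutation.

Lemma computes_two_of_three S1 S2 (R : realType) (prob : seq S2 -> seq S1 -> R)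
    (Rel : seq S1 -> seq S2 -> bool) (b1 b2 : seq S1 -> seq S2 -> bool) :
  (forall v w, prob w v = ((b1 v w)%:R + (b2 v w)%:R) / 3) ->
  (forall v w, Rel v w = b1 v w && b2 v w) ->
  computes prob Rel (2 / 3).
Proof.
move=> probE RelE v w; rewrite probE RelE.
by case: (b1 v w); case: (b2 v w); split=> //= _; lra.
Qed.

Definition init : 'I_10 := @Ordinal 10 0 isT.
Definition copy1 : 'I_10 := @Ordinal 10 1 isT.
Definition skip1 : 'I_10 := @Ordinal 10 2 isT.
Definition skip2 : 'I_10 := @Ordinal 10 3 isT.
Definition copy2 : 'I_10 := @Ordinal 10 4 isT.
Definition acc1 : 'I_10 := @Ordinal 10 5 isT.
Definition acc2 : 'I_10 := @Ordinal 10 6 isT.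
Definition rej0 : 'I_10 := @Ordinal 10 7 isT.
Definition rej1 : 'I_10 := @Ordinal 10 8 isT.
Definition rej2 : 'I_10 := @Ordinal 10 9 isT.

Definition acc_states : {set 'I_10} := [set acc1; acc2].
Definition rej_states : {set 'I_10} := [set rej0; rej1; rej2].
Local Notation halt := (halting acc_states rej_states).

Lemma haltingE q : halt q = (4 < q)%N.
Proof. by rewrite /halting !inE; case: q => [[|[|[|[|[|[|[|[|[|[|k]]]]]]]]]] ?]. Qed.

Lemma disjoint_acc_rej : [disjoint acc_states & rej_states].
Proof.
by apply/pred0P => q; rewrite /= !inE; case: q => [[|[|[|[|[|[|[|[|[|[|k]]]]]]]]]] ?].
Qed.

(* Permutations compose left to right, so this maps x to y, y to z and z to x. *)
Definition cycle3 (x y z : 'I_10) : {perm 'I_10} := (tperm x y * tperm x z)%g.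

(* Only the images of the five live states [init .. copy2] matter; the halting
   states merely complete each map to a permutation, as the qfst needs unitary
   matrices. *)
Definition sigma (a : tsym 'I_3) : {perm 'I_10} :=
  match a with
  | TStart => 1%g
  | TSym x => if x == sym2
              then (tperm init rej0 * cycle3 copy1 skip2 rej1 * cycle3 skip1 copy2 rej2)%g
              else tperm init rej0
  | TEnd => (tperm init rej0 * tperm copy1 rej1 * tperm skip1 rej2 *
             tperm skip2 acc1 * tperm copy2 acc2)%g
  end.

Definition out (a : tsym 'I_3) (q : 'I_10) : seq 'I_2 :=
  if a is TSym x then
    if (q == copy1) || (q == copy2) then (if insub (val x) is Some b then [:: b] else [::])
    else [::]
  else [::].

Local Notation run := (dacc_from (fun a q => sigma a q) out acc_states rej_states).

Lemma sigma_bit b (q : 'I_10) : (0 < q < 5)%N -> sigma (TSym (emb01 b)) q = q.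
Proof.
have not_two : (emb01 b == sym2) = false by rewrite -val_eqE /= ltn_eqF.
by rewrite /= not_two /tperm permE /=; case: q => [[|[|[|[|[|k]]]]] ?].
Qed.

Lemma run_bits (q : 'I_10) y u s w : (0 < q < 5)%N ->
  run q y (map (@TSym _) (map emb01 u) ++ s) w =
  run q (y ++ if (q == copy1) || (q == copy2) then u else [::]) s w.
Proof.
move=> live; elim: u y => [|b u IHu] y /=; first by rewrite if_same cats0.
have : ~~ halt q by rewrite haltingE -leqNgt; case/andP: live.
rewrite /halting negb_or => /andP[/negbTE q_nacc /negbTE q_nrej].
rewrite sigma_bit // q_nacc q_nrej valK IHu -catA.
by case: ifP.
Qed.

Lemma run_end (q : 'I_10) y w : (0 < q < 5)%N ->
  run q y [:: TEnd] w = ((q == skip2) || (q == copy2)) && (y == w).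
Proof.
by case: q => [[|[|[|[|[|k]]]]] ?] //=; rewrite !permM /tperm !permE !inE /= ?cats0.
Qed.

Lemma run_two (q : 'I_10) y s w : (0 < q < 5)%N ->
  run q y (TSym sym2 :: s) w =
  if q == copy1 then run skip2 y s w else if q == skip1 then run copy2 y s w else false.
Proof.
rewrite /= insubF //.
by case: q => [[|[|[|[|[|k]]]]] ?] //=; rewrite /cycle3 !permM /tperm !permE !inE /= ?cats0.
Qed.

Lemma run_init v y w : run init y (behead (tape v)) w = false.
Proof.
by case: v => [|x v] /=; [|case: (x == sym2)]; rewrite /cycle3 ?permM /tperm !permE !inE.
Qed.

Lemma bit_or_two (x : 'I_3) : {b | x = emb01 b} + {x = sym2}.
Proof.
case: x => [[|[|[|k]]] ?] //; [left; exists ord0 | left; exists ord_max | right];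
  exact: val_inj.
Qed.

Variant bits_spec : seq 'I_3 -> Type :=
  | OnlyBits u : bits_spec (map emb01 u)
  | BitsThenTwo u t : bits_spec (map emb01 u ++ sym2 :: t).

Lemma bitsP v : bits_spec v.
Proof.
elim: v => [|x v IHv]; first exact: (OnlyBits [::]).
have [[b ->] | ->] := bit_or_two x; last exact: (BitsThenTwo [::] v).
by case: IHv => [u | u t]; [exact: (OnlyBits (b :: u)) | exact: (BitsThenTwo (b :: u) t)].
Qed.

Lemma R2_branches v w :
  R2 v w = run copy1 [::] (behead (tape v)) w && run skip1 [::] (behead (tape v)) w.
Proof.
rewrite tape_body; apply/eqP/andP => [-> | []].
  rewrite map_cat -catA !run_bits //; cbn -[dacc_from].
  rewrite !run_two //; cbn -[dacc_from].
  rewrite !run_bits //; cbn -[dacc_from].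
  by rewrite !run_end // cats0 !eqxx.
case/bitsP: v => [u | u t]; rewrite ?map_cat -?catA !run_bits //; cbn -[dacc_from].
  by rewrite run_end.
rewrite !run_two //; cbn -[dacc_from].
case/bitsP: t => [u' | u' t']; rewrite ?map_cat -?catA !run_bits //; cbn -[dacc_from].
  by rewrite !run_end //= cats0 => /eqP <- /eqP <-.
by rewrite (@run_two skip2).
Qed.

Definition branch_weight (R : realType) (p : 'I_10) : R := (p < 3)%N%:R / 3.

Lemma sum_branch_weight (R : realType) : \sum_p branch_weight R p = 1.
Proof. by rewrite !big_ord_recl big_ord0 /branch_weight /=; field. Qed.

Lemma sum_branches (R : realType) v w :
  \sum_p branch_weight R p * (run p [::] (behead (tape v)) w)%:R =
  ((run copy1 [::] (behead (tape v)) w)%:R + (run skip1 [::] (behead (tape v)) w)%:R) / 3.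
Proof.
rewrite !big_ord_recl big_ord0 /branch_weight /= !mul0r !addr0.
have -> : lift ord0 (lift ord0 ord0) = skip1 by apply: val_inj.
have -> : lift ord0 ord0 = copy1 by apply: val_inj.
have -> : ord0 = init by apply: val_inj.
by rewrite run_init mulr0n mulr0 add0r -mulrDr mul1r mulrC.
Qed.

Lemma halting_sigma_end q : ~~ halt q -> halt (sigma TEnd q).
Proof.
rewrite !haltingE -leqNgt.
by case: q => [[|[|[|[|[|k]]]]] ?] //= _; rewrite !permM /tperm !permE.
Qed.

(* V_$ must send every state, halting ones included, to a halting state, which no
   permutation does: the pfst makes the halting states absorbing. *)
Definition pfst_V (R : realType) (a : tsym 'I_3) : 'M[R]_10 :=
  if a is TStart then \matrix_(q, p) (if q == init then branch_weight R p else (q == p)%:R)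
  else \matrix_(q, p) ((if halt q then q else sigma a q) == p)%:R.

Definition two_copies_pfst (R : realType) : pfst 'I_3 'I_2 R :=
  @Pfst _ _ R 10 (pfst_V R) out init acc_states rej_states.

Lemma two_copies_pfst_ok (R : realType) : is_pfst (two_copies_pfst R).
Proof.
split=> [|a q p|a q|q p /=]; rewrite ?mxE.
- exact: disjoint_acc_rej.
- by case: a => [x||]; rewrite /= mxE ?ler0n //; case: eqP; rewrite ?divr_ge0 ?ler0n.
- case: a => [x||] /=; under eq_bigr do rewrite mxE; rewrite ?sum_delta1 //.
  by case: eqP; rewrite ?sum_branch_weight ?sum_delta1.
- move=> live_p; case: eqP => // end_q; move: live_p; rewrite -end_q.
  by case: ifPn => [-> // | /halting_sigma_end ->].
Qed.

Lemma two_copies_pfst_prob (R : realType) v w :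
  pfst_prob (two_copies_pfst R) w v =
  ((run copy1 [::] (behead (tape v)) w)%:R + (run skip1 [::] (behead (tape v)) w)%:R) / 3.
Proof.
rewrite (pfst_prob_branches (T := two_copies_pfst R) (next := fun a q => sigma a q))
  => [|a q p a_ok live_q|p].
- by rewrite -sum_branches; apply: eq_bigr => p _; rewrite mxE eqxx.
- by case: a a_ok => [x||] //= _; rewrite mxE (negbTE live_q).
- rewrite haltingE /= mxE eqxx /branch_weight => halt_p.
  by rewrite ltnNge (@leq_trans 5) ?mul0r.
Qed.

Section BranchReflection.
Variable R : realType.

Definition branch_amplitude : R := Num.sqrt 3^-1.
Local Notation s := branch_amplitude.

Lemma branch_amplitude_sqr : s ^+ 2 = 3^-1.
Proof. by rewrite sqr_sqrtr // invr_ge0 ler0n. Qed.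

Lemma branch_amplitude_lt1 : s < 1.
Proof. by rewrite -sqrtr1 ltr_sqrt ?ltr01 // invf_lt1 ?ltr0n ?ltr1n. Qed.

(* [e_init - s (e_init + e_copy1 + e_skip1)]: its reflection exchanges [e_init]
   and the unit vector [s (e_init + e_copy1 + e_skip1)]. *)
Definition branch_vector : 'rV[R]_10 := \row_j ((j == init)%:R - (j < 3)%N%:R * s).

Definition branch_reflection : 'M[R]_10 := householder branch_vector.

Lemma branch_vector_sqr_norm : (branch_vector *m branch_vector^T) 0 0 = 2 * (1 - s).
Proof.
rewrite !mxE !big_ord_recl big_ord0 !mxE /=.
by transitivity (1 - 2 * s + 3 * s ^+ 2); [ring | rewrite branch_amplitude_sqr; field].
Qed.

Lemma branch_vector_neq0 : (branch_vector *m branch_vector^T) 0 0 != 0.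
Proof.
rewrite branch_vector_sqr_norm mulf_neq0 ?pnatr_eq0 // subr_eq0 eq_sym.
by rewrite lt_eqF // branch_amplitude_lt1.
Qed.

Lemma branch_reflection_init p : branch_reflection init p = (p < 3)%N%:R * s.
Proof.
rewrite /branch_reflection /householder branch_vector_sqr_norm !mxE big_ord1 !mxE /=.
have s_neq1 : 1 - s != 0 by rewrite subr_eq0 eq_sym lt_eqF // branch_amplitude_lt1.
by rewrite eq_sym; field.
Qed.

End BranchReflection.

Definition qfst_V (R : realType) (a : tsym 'I_3) : 'M[R[i]]_10 :=
  if a is TStart then map_mx (real_complex R) (branch_reflection R) else perm_mx (sigma a).

Definition two_copies_qfst (R : realType) : qfst 'I_3 'I_2 R :=
  @Qfst _ _ R 10 (qfst_V R) out init acc_states rej_states.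

Lemma two_copies_qfst_ok (R : realType) : is_qfst (two_copies_qfst R).
Proof.
split=> [|[x||]|q p live_q live_p] /=.
- exact: disjoint_acc_rej.
- exact: unitary_perm_mx.
- exact/unitary_real/householder_orthogonal/branch_vector_neq0.
- exact: unitary_perm_mx.
- rewrite perm_mxE; case: eqP => // end_q.
  by move: live_p; rewrite -end_q halting_sigma_end.
Qed.

Lemma two_copies_qfst_prob (R : realType) v w :
  qfst_prob (two_copies_qfst R) w v =
  ((run copy1 [::] (behead (tape v)) w)%:R + (run skip1 [::] (behead (tape v)) w)%:R) / 3.
Proof.
rewrite (qfst_prob_branches (T := two_copies_qfst R) (sigma := sigma)) => [|[x||] //|p].
- rewrite -sum_branches; apply: eq_bigr => p _.
  rewrite /= mxE sqmod_real branch_reflection_init exprMn branch_amplitude_sqr.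
  by rewrite /branch_weight; case: (p < 3)%N; rewrite ?mulr1n ?mulr0n ?expr1n ?expr0n.
- rewrite /= haltingE mxE branch_reflection_init => halt_p.
  by rewrite ltnNge (@leq_trans 5) ?mul0r.
Qed.

Theorem theorem6 (R : realType) :
  (exists T : pfst 'I_3 'I_2 R, is_pfst T /\ computes (pfst_prob T) R2 (2 / 3))
  /\
  (exists T : qfst 'I_3 'I_2 R, is_qfst T /\ computes (qfst_prob T) R2 (2 / 3)).
Proof.
split.
  exists (two_copies_pfst R); split; first exact: two_copies_pfst_ok.
  exact: computes_two_of_three (two_copies_pfst_prob R) R2_branches.
exists (two_copies_qfst R); split; first exact: two_copies_qfst_ok.
exact: computes_two_of_three (two_copies_qfst_prob R) R2_branches.
Qed.
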